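(* Let $w \in S_n$. Suppose that $\mathfrak{S}_w$ is a single standard elementary monomial $e_{(a_1,\dots,a_n)} = \prod_i e^i_{a_i}$. Then for each $1 \le i \le n-1$, $a_i = 0$ if and only if $i$ is an ascent of $w$. Furthermore, if $i$ is a descent of $w$ and $i-1$ is an ascent of $w$, then $\partial_i(\mathfrak{S}_w) = \mathfrak{S}_{ws_i}$ is also a single standard elementary monomial. Similarly, suppose that $\mathfrak{S}_w$ is a single complete homogeneous monomial $h_{(a_1,\dots,a_n)} = \prod_i h^i_{a_i}$. Then $a_i = 0$ if and only if $i$ is an ascent of $w$; and if $i$ is a descent of $w$ and $i+1$ is an ascent of $w$, then $\partial_i(\mathfrak{S}_w) = \mathfrak{S}_{ws_i}$ is also a single complete homogeneous monomial.
   Context: $e^i_j$ (resp. $h^i_j$) is the elementary (resp. complete homogeneous) symmetric polynomial of degree $j$ in $x_1,\dots,x_i$. The divided difference operator is $\partial_i f = (f - s_i f)/(x_i - x_{i+1})$ where $s_i$ swaps $x_i$ and $x_{i+1}$. Schubert polynomials: $\mathfrak{S}_{w_0} = x_1^{n-1}\cdots x_{n-1}$ for the longest $w_0\in S_n$, and $\partial_i\mathfrak{S}_w = \mathfrak{S}_{ws_i}$ if $\ell(ws_i) = \ell(w)-1$, $0$ otherwise. A position $i$ is a descent of $w$ if $w(i+1) < w(i)$ and an ascent if $w(i+1) > w(i)$. *)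

From HB Require Import structures.
From mathcomp Require Import all_boot all_order all_algebra all_fingroup.
From mathcomp Require Import mpoly.
From Stdlib Require Import ClassicalEpsilon.

Set Implicit Arguments.
Unset Strict Implicit.
Unset Printing Implicit Defensive.

Import GRing.Theory.
Local Open Scope ring_scope.

Section Schubert.
Variable n : nat.

(* Conventions: the paper's variables x_1..x_n are 'X_k (k : 'I_n), with
   x_{k+1} = 'X_k.  Paper positions i (1 <= i <= n) are 1-based nats and
   position i corresponds to the ordinal i-1. *)

(* the simple transposition s_i (swapping positions i and i+1, 1-based);
   only used for 1 <= i <= n-1 (identity otherwise) *)
Definition simple_tr (i : nat) : 'S_n :=
  match insub i.-1, insub i with
  | Some a, Some b => tperm a b
  | _, _ => 1%g
  end.

Definition xdiff (i : nat) : {mpoly int[n]} :=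
  match insub i.-1, insub i with
  | Some a, Some b => 'X_a - 'X_b
  | _, _ => 0
  end.

Definition swapvar (i : nat) (f : {mpoly int[n]}) : {mpoly int[n]} :=
  msym (simple_tr i) f.

(* divided difference: the (unique) g with (x_i - x_{i+1}) g = f - s_i f *)
Definition ddiff (i : nat) (f : {mpoly int[n]}) : {mpoly int[n]} :=
  epsilon (inhabits 0) (fun g => xdiff i * g = f - swapvar i f).

(* w s_i : with mathcomp's convention (s * t) x = t (s x), the permutation
   x |-> w (s_i x) is (s_i * w). *)
Definition mul_si (w : 'S_n) (i : nat) : 'S_n := (simple_tr i * w)%g.

Definition perm_len (w : 'S_n) : nat :=
  #|[set p : 'I_n * 'I_n | (p.1 < p.2)%N && (w p.2 < w p.1)%N]|.

Definition w0 : 'S_n := perm (@rev_ord_inj n).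

Definition xdelta : {mpoly int[n]} := \prod_(k < n) 'X_k ^+ (n.-1 - k).

(* Schubert polynomials, characterised as in the paper's context:
   S_{w0} = x^delta and, for 1 <= i <= n-1,
   d_i S_w = S_{w s_i} if l(w s_i) = l(w) - 1, and 0 otherwise. *)
Definition is_schubert (S : 'S_n -> {mpoly int[n]}) : Prop :=
  S w0 = xdelta /\
  forall (w : 'S_n) (i : nat), (1 <= i <= n.-1)%N ->
    ddiff i (S w) =
      if (perm_len (mul_si w i)).+1 == perm_len w then S (mul_si w i) else 0.

(* the value w(i) as a 1-based nat, extended by w(0) = 0, w(i) = i for i > n *)
Definition pval (w : 'S_n) (i : nat) : nat :=
  if i == 0%N then 0%N else
  match insub i.-1 with
  | Some k => (nat_of_ord (w k)).+1
  | None => i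
  end.

Definition is_ascent (w : 'S_n) (i : nat) : bool := (pval w i < pval w i.+1)%N.
Definition is_descent (w : 'S_n) (i : nat) : bool := (pval w i.+1 < pval w i)%N.

Definition esym (i j : nat) : {mpoly int[n]} :=
  \sum_(A : {set 'I_n} | (A \subset [set k : 'I_n | (k < i)%N]) && (#|A| == j))
     \prod_(k in A) 'X_k.

Definition hsym (i j : nat) : {mpoly int[n]} :=
  \sum_(m : 'X_{1..n < j.+1} |
          (mdeg m == j) && [forall k : 'I_n, (i <= k)%N ==> (m k == 0%N)])
     'X_[m].

Definition emono (a : nat -> nat) : {mpoly int[n]} :=
  \prod_(1 <= i < n.+1) esym i (a i).
Definition hmono (a : nat -> nat) : {mpoly int[n]} :=
  \prod_(1 <= i < n.+1) hsym i (a i).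

Definition std_e (a : nat -> nat) : Prop := forall i, (1 <= i <= n)%N -> (a i <= i)%N.

End Schubert.

From Pilot Require Import Defs.
From HB Require Import structures.
From mathcomp Require Import all_boot all_order all_algebra all_fingroup.
From mathcomp Require Import mpoly zify ring.
From Stdlib Require Import ClassicalEpsilon.

(* Write S_w = prod_j F_j(a_j) with F_j = e^j or F_j = h^j.  All factors with j <> i
   are symmetric in x_i, x_(i+1), so d_i S_w = (prod_(j <> i) F_j(a_j)) * d_i F_i(a_i);
   here d_i 1 = 0, while for k > 0 the polynomials d_i e^i_k = e^(i-1)_(k-1) (k <= i)
   and d_i h^i_k = h^(i+1)_(k-1) are nonzero.  As d_i S_w is S_(w s_i) at a descent and
   0 at an ascent, and Schubert polynomials never vanish, a_i = 0 exactly at the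
   ascents.  At a descent i the new factor falls into slot i-1 (resp. i+1), which is
   empty when that position is an ascent.  Slot n of h is always empty: h^n_t is fixed
   by every s_j, so it passes through every d_j while descending to S_1 = 1, and would
   divide 1.  The same argument with the factor 0 shows that S_v <> 0.  Finally S_1 = 1
   is computed along a reduced word of w0. *)

Set Implicit Arguments.
Unset Strict Implicit.
Unset Printing Implicit Defensive.

Import GRing.Theory.
Local Open Scope ring_scope.

Lemma subr_dvd_swap (R : comPzRingType) (x y : R) p q :
  exists g, (x - y) * g = x ^+ p * y ^+ q - x ^+ q * y ^+ p.
Proof.
wlog le_qp : p q / (q <= p)%N.
  move=> H; have [/H //|/ltnW/H [g hg]] := leqP q p.
  by exists (- g); rewrite mulrN hg opprB.
rewrite -(subnK le_qp); set d := (p - q)%N.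
exists ((x * y) ^+ q * \sum_(k < d) x ^+ (d.-1 - k) * y ^+ k).
by rewrite mulrCA -subrXX !exprD exprMn; ring.
Qed.

Section DividedDifference.
Variable n : nat.
Local Notation P := {mpoly int[n]}.

Variant simple_tr_spec (i : nat) : Prop :=
  SimpleTrSpec (a b : 'I_n) of (a : nat).+1 = i & (b : nat) = i &
    simple_tr n i = tperm a b & xdiff n i = 'X_a - 'X_b.

Lemma simple_trP i : (0 < i < n)%N -> simple_tr_spec i.
Proof.
move=> /andP [i_gt0 lt_in]; have := @SimpleTrSpec i; rewrite /simple_tr /xdiff.
case: insubP => [a _ ea|]; last by lia.
case: insubP => [b _ eb|]; last by lia.
by move/(_ a b); apply=> //=; rewrite ?ea ?eb; lia.
Qed.

Lemma ord_succ_neq (a b : 'I_n) : (a : nat).+1 = b -> a != b.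
Proof. by move=> ab; apply/eqP => e; move: ab; rewrite e; lia. Qed.

Lemma msym_tpermX (a b : 'I_n) : msym (tperm a b) ('X_a : P) = 'X_b.
Proof.
rewrite msymX tpermV; congr 'X_[_]; apply/mnmP => p; rewrite mnmE !mnm1E.
by rewrite -{1}(tpermR a b) (inj_eq perm_inj).
Qed.

Lemma tperm_monomial_dvd (a b : 'I_n) (m : 'X_{1..n}) : a != b ->
  exists g : P, ('X_a - 'X_b) * g = 'X_[m] - msym (tperm a b) 'X_[m].
Proof.
move=> /negbTE ab; have ba : (b == a) = false by rewrite eq_sym.
pose r := [multinom (if (k == a) || (k == b) then 0%N else m k) | k < n].
have em : m = (r + U_(a) *+ m a + U_(b) *+ m b)%MM.
  apply/mnmP => k; rewrite !mnmDE !mulmnE !mnm1E !mnmE.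
  have [->|ka] := eqVneq k a; first by rewrite ?eqxx ?ab ?ba /=; lia.
  have [->|kb] := eqVneq k b; first by rewrite ?eqxx ?ab ?ba /=; lia.
  by rewrite ?(eq_sym _ k) ?(negbTE ka) ?(negbTE kb) /=; lia.
have esm : [multinom m (tperm a b k) | k < n] = (r + U_(a) *+ m b + U_(b) *+ m a)%MM.
  apply/mnmP => k; rewrite !mnmDE !mulmnE !mnm1E !mnmE.
  have [->|ka] := eqVneq k a; first by rewrite tpermL ?eqxx ?ab ?ba /=; lia.
  have [->|kb] := eqVneq k b; first by rewrite tpermR ?eqxx ?ab ?ba /=; lia.
  by rewrite tpermD 1?eq_sym // ?(eq_sym _ k) ?(negbTE ka) ?(negbTE kb) /=; lia.
rewrite msymX tpermV {1}em esm !mpolyXD -!mpolyXn.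
have [g hg] := subr_dvd_swap ('X_a : P) 'X_b (m a) (m b).
by exists ('X_[r] * g); rewrite mulrCA hg; ring.
Qed.

Lemma tperm_dvd (a b : 'I_n) (f : P) : a != b ->
  exists g : P, ('X_a - 'X_b) * g = f - msym (tperm a b) f.
Proof.
move=> ab; rewrite (mpolyE f); elim: (msupp f) => [|m s [g hg]].
  by exists 0; rewrite !big_nil msym0 mulr0 subr0.
have [g1 hg1] := tperm_monomial_dvd m ab.
exists (f@_m *: g1 + g).
by rewrite !big_cons msymD msymZ mulrDr -scalerAr hg1 hg scalerBr opprD addrACA.
Qed.

Lemma xdiff_neq0 i : (0 < i < n)%N -> xdiff n i != 0.
Proof.
move=> /simple_trP [a b ia ib _ ->]; rewrite subr_eq0; apply/eqP.
move/(congr1 (mcoeff U_(a)%MM)); rewrite !mcoeffX eqxx.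
suff /negbTE -> : (U_(b) != U_(a))%MM by [].
apply: contraNneq (ord_succ_neq (etrans ia (esym ib))) => /mnmP /(_ a).
by rewrite !mnm1E eqxx eq_sym; case: (a == b).
Qed.

Lemma ddiffP i (f : P) : (0 < i < n)%N -> xdiff n i * ddiff i f = f - swapvar i f.
Proof.
move=> lt_in; apply: (epsilon_spec (inhabits 0) (fun g => _ * g = _)).
rewrite /swapvar; have [a b ia ib -> ->] := simple_trP lt_in.
by apply: tperm_dvd; apply: ord_succ_neq; rewrite ia ib.
Qed.

Lemma ddiff_unique i (f g : P) : (0 < i < n)%N ->
  xdiff n i * g = f - swapvar i f -> ddiff i f = g.
Proof. by move=> lt_in h; apply: (mulfI (xdiff_neq0 lt_in)); rewrite ddiffP. Qed.

Lemma ddiff_sym i (f : P) : (0 < i < n)%N -> swapvar i f = f -> ddiff i f = 0.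
Proof. by move=> lt_in sf; apply: ddiff_unique; rewrite // sf subrr mulr0. Qed.

Lemma ddiffMl i (p q : P) : (0 < i < n)%N -> swapvar i p = p ->
  ddiff i (p * q) = p * ddiff i q.
Proof.
move=> lt_in sp; apply: ddiff_unique => //.
by rewrite mulrCA ddiffP // /swapvar msymM -/(swapvar i p) sp mulrBr.
Qed.

End DividedDifference.

Section SymmetricFunctions.
Variable n : nat.
Local Notation P := {mpoly int[n]}.

Lemma mnm1_le (m : 'X_{1..n}) (a : 'I_n) : (0 < m a)%N -> (U_(a) <= m)%MM.
Proof. by move=> ma_gt0; apply/mnm_lepP => p; rewrite mnm1E; case: eqP => [<-|]. Qed.

Lemma mcoeffXM (a : 'I_n) (p : P) m :
  ('X_a * p)@_m = if (0 < m a)%N then p@_(m - U_(a))%MM else 0.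
Proof.
rewrite mulrC; case: posnP => [ma0|/mnm1_le le_am].
  apply: memN_msupp_eq0; rewrite (perm_mem (msuppMX p U_(a))).
  by apply/mapP => -[m' _ em]; move: ma0; rewrite em mnmDE mnm1E eqxx; lia.
by rewrite -{1}(submK le_am) addmC mcoeffMX.
Qed.

Lemma mdeg_subUS (m : 'X_{1..n}) (a : 'I_n) : (0 < m a)%N ->
  mdeg m = (mdeg (m - U_(a)))%MM.+1.
Proof. by move/mnm1_le=> le_am; rewrite -{1}(submK le_am) mdegD mdeg1 addn1. Qed.

Lemma mnm_subUE (m : 'X_{1..n}) (a p : 'I_n) :
  (m - U_(a))%MM p = if p == a then (m p).-1 else m p.
Proof. by rewrite mnmBE mnm1E eq_sym; case: eqP => _; lia. Qed.

Definition mset (A : {set 'I_n}) : 'X_{1..n} := [multinom (p \in A : nat) | p < n].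

Lemma mset_inj : injective mset.
Proof.
move=> A B /mnmP eAB; apply/setP => p.
by have := eAB p; rewrite !mnmE; do 2 case: (_ \in _).
Qed.

Lemma prodX_mset (A : {set 'I_n}) : \prod_(p in A) ('X_p : P) = 'X_[mset A].
Proof.
rewrite (mpolyXE_id int (mset A)) big_mkcond /=; apply: eq_bigr => p _.
by rewrite mnmE; case: (p \in A); rewrite ?expr1 ?expr0.
Qed.

Lemma mdeg_mset A : mdeg (mset A) = #|A|.
Proof.
rewrite mdegE -sum1_card [RHS]big_mkcond /=; apply: eq_bigr => p _.
by rewrite mnmE; case: (p \in A).
Qed.

Definition echar (j k : nat) (m : 'X_{1..n}) : bool :=
  [forall p : 'I_n, (m p <= (p < j))%N] && (mdeg m == k).

Lemma echarP j k (m : 'X_{1..n}) :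
  reflect ((forall p : 'I_n, (m p <= (p < j))%N) /\ mdeg m = k) (echar j k m).
Proof. by apply: (iffP andP) => -[/forallP ? /eqP ?]; split=> //; apply/forallP. Qed.

Lemma esym_coef j k m : (Defs.esym n j k)@_m = (echar j k m)%:R.
Proof.
rewrite /Defs.esym raddf_sum /=.
under eq_bigr do rewrite prodX_mset mcoeffX.
have [/echarP [m_le dm]|not_e] := boolP (echar j k m); last first.
  rewrite big1 // => A /andP [/subsetP sA /eqP cA]; case: eqP => // eA.
  case/negP: not_e; rewrite -eA; apply/echarP; split; last by rewrite mdeg_mset.
  move=> p; rewrite mnmE; case: (boolP (p \in A)) => // /sA.
  by rewrite inE => ->.
pose A0 := [set p | m p != 0%N].
have eA0 : mset A0 = m.
  apply/mnmP => p; rewrite mnmE inE; have := m_le p.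
  by case: (m p) => [|[|?]] //; case: (p < j)%N.
have cA0 : (A0 \subset [set q : 'I_n | (q < j)%N]) && (#|A0| == k).
  apply/andP; split; last by rewrite -mdeg_mset eA0 dm.
  by apply/subsetP => p; rewrite !inE; have := m_le p; case: (p < j)%N => //; lia.
rewrite (bigD1 A0) //= eA0 eqxx big1 ?addr0 // => B /andP [_ nB].
by case: eqP => // eB; case/eqP: nB; apply: mset_inj; rewrite eA0.
Qed.

Lemma esym0 j : Defs.esym n j 0 = 1.
Proof.
apply/mpolyP => m; rewrite esym_coef mcoeff1; congr (nat_of_bool _)%:R.
apply/echarP/eqP => [[_ /eqP]|->]; first by rewrite mdeg_eq0 => /eqP.
by split; [move=> p; rewrite mnm0E | exact: mdeg0].
Qed.

Lemma ltnS_ord_neq (p a : 'I_n) : p != a -> (p < a.+1)%N = (p < a)%N.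
Proof. by move=> pa; rewrite ltnS leq_eqVlt -[(p == a :> nat)]/(p == a) (negbTE pa). Qed.

Lemma esymS (a : 'I_n) k :
  Defs.esym n a.+1 k.+1 = Defs.esym n a k.+1 + 'X_a * Defs.esym n a k.
Proof.
apply/mpolyP => m; rewrite mcoeffD mcoeffXM !esym_coef.
case: posnP => [ma0|ma_gt0]; last have -> : echar a k.+1 m = false.
- rewrite addr0; congr (nat_of_bool _)%:R.
  by apply/echarP/echarP => -[m_le dm]; split=> // p; have := m_le p;
     have [->|pa] := eqVneq p a; rewrite ?ma0 // ltnS_ord_neq.
- by apply/echarP => -[m_le _]; have := m_le a; rewrite ltnn /=; lia.
rewrite add0r; congr (nat_of_bool _)%:R.
apply/echarP/echarP => -[m_le dm]; split=> [p|].
- rewrite mnm_subUE; have := m_le p; have [->|pa] := eqVneq p a.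
    by rewrite ltnSn ltnn /=; lia.
  by rewrite ltnS_ord_neq.
- by move: dm; rewrite (mdeg_subUS ma_gt0) => -[].
- have := m_le p; rewrite mnm_subUE; have [->|pa] := eqVneq p a.
    by rewrite ltnSn ltnn /=; lia.
  by rewrite ltnS_ord_neq.
- by rewrite (mdeg_subUS ma_gt0) dm.
Qed.

Lemma esym_neq0 j k : (k <= j)%N -> (k <= n)%N -> Defs.esym n j k != 0.
Proof.
move=> le_kj le_kn; pose A := [set widen_ord le_kn p | p : 'I_k].
have cA : #|A| = k.
  by rewrite card_imset ?card_ord // => x y /(congr1 val) /= /val_inj.
apply/eqP => /(congr1 (mcoeff (mset A))); rewrite esym_coef mcoeff0.
suff -> : echar j k (mset A) by [].
apply/echarP; split=> [p|]; last by rewrite mdeg_mset.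
rewrite mnmE; case: (boolP (p \in A)) => // /imsetP [q _ ->] /=.
by have := ltn_ord q; lia.
Qed.

Definition hchar (j k : nat) (m : 'X_{1..n}) : bool :=
  [forall p : 'I_n, (j <= p)%N ==> (m p == 0%N)] && (mdeg m == k).

Lemma hcharP j k (m : 'X_{1..n}) :
  reflect ((forall p : 'I_n, (j <= p)%N -> m p = 0%N) /\ mdeg m = k) (hchar j k m).
Proof.
apply: (iffP andP) => -[m0 /eqP dm]; split=> //.
  by move=> p le_jp; have /implyP/(_ le_jp)/eqP := forallP m0 p.
by apply/forallP => p; apply/implyP => /m0 ->.
Qed.

Lemma hsym_coef j k m : (hsym n j k)@_m = (hchar j k m)%:R.
Proof.
rewrite /hsym raddf_sum /=.
under eq_bigr do rewrite mcoeffX.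
have [hm|not_h] := boolP (hchar j k m); last first.
  rewrite big1 // => c /andP [dc fc]; case: eqP => // ec.
  by case/negP: not_h; rewrite -ec /hchar dc fc.
move: (hm) => /andP [m0 /eqP dm].
have dm_lt : (mdeg m < k.+1)%N by rewrite dm.
rewrite (bigD1 (BMultinom dm_lt)) /= ?dm ?eqxx ?m0 //.
rewrite big1 ?addr0 // => c /andP [_ nc]; case: eqP => // ec.
by case/eqP: nc; apply: val_inj.
Qed.

Lemma hsym0 j : hsym n j 0 = 1.
Proof.
apply/mpolyP => m; rewrite hsym_coef mcoeff1; congr (nat_of_bool _)%:R.
apply/hcharP/eqP => [[_ /eqP]|->]; first by rewrite mdeg_eq0 => /eqP.
by split; [move=> p; rewrite mnm0E | exact: mdeg0].
Qed.

Lemma hsymS (b : 'I_n) k :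
  hsym n b.+1 k.+1 = hsym n b k.+1 + 'X_b * hsym n b.+1 k.
Proof.
apply/mpolyP => m; rewrite mcoeffD mcoeffXM !hsym_coef.
case: posnP => [mb0|mb_gt0]; last have -> : hchar b k.+1 m = false.
- rewrite addr0; congr (nat_of_bool _)%:R.
  apply/hcharP/hcharP => -[m0 dm]; split=> // p le_bp; last by apply: m0; lia.
  by have [->|pb] := eqVneq p b; [|apply: m0; rewrite ltn_neqAle eq_sym pb].
- by apply/hcharP => -[m0 _]; have := m0 b (leqnn b); lia.
rewrite add0r; congr (nat_of_bool _)%:R.
apply/hcharP/hcharP => -[m0 dm]; split=> [p le_bp|].
- by rewrite mnm_subUE m0 //; case: ifP.
- by move: dm; rewrite (mdeg_subUS mb_gt0) => -[].
- have pb : (p == b) = false by apply/negbTE; rewrite -(inj_eq val_inj) /= gtn_eqF.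
  by have := m0 p le_bp; rewrite mnm_subUE pb.
- by rewrite (mdeg_subUS mb_gt0) dm.
Qed.

Lemma hsym_neq0 j k : (0 < j)%N -> (0 < n)%N -> hsym n j k != 0.
Proof.
move=> j_gt0 n_gt0; pose m := (U_(Ordinal n_gt0) *+ k)%MM.
apply/eqP => /(congr1 (mcoeff m)); rewrite hsym_coef mcoeff0.
suff -> : hchar j k m by [].
apply/hcharP; split=> [p le_jp|]; last by rewrite mdegMn mdeg1 mul1n.
by rewrite mulmnE mnm1E -(inj_eq val_inj) /=; case: eqP => // p0; move: le_jp; rewrite -p0; lia.
Qed.

End SymmetricFunctions.

Section DividedDifferenceSymmetricFunctions.
Variable n : nat.

Lemma tperm_ltn (a b : 'I_n) (j : nat) : (a : nat).+1 = b -> j != b ->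
  forall p, (tperm a b p < j)%N = (p < j)%N.
Proof.
move=> ab /eqP jb p; case: tpermP => [->|->|//].
  by apply/idP/idP; move: jb; rewrite -ab; lia.
by apply/idP/idP; move: jb; rewrite -ab; lia.
Qed.

Lemma echar_mperm (s : 'S_n) j k (m : 'X_{1..n}) : (forall p, (s p < j) = (p < j))%N ->
  echar j k [multinom m (s p) | p < n] = echar j k m.
Proof.
move=> sj; rewrite /echar mdeg_mperm; congr (_ && _).
apply/forallP/forallP => m_le p.
  by have := m_le (s^-1 p)%g; rewrite mnmE permKV -sj permKV.
by rewrite mnmE -sj; apply: m_le.
Qed.

Lemma hchar_mperm (s : 'S_n) j k (m : 'X_{1..n}) : (forall p, (s p < j) = (p < j))%N ->
  hchar j k [multinom m (s p) | p < n] = hchar j k m.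
Proof.
move=> sj; have {}sj p : (j <= s p)%N = (j <= p)%N by rewrite leqNgt sj -leqNgt.
rewrite /hchar mdeg_mperm; congr (_ && _).
apply/forallP/forallP => m0 p.
  by have := m0 (s^-1 p)%g; rewrite mnmE permKV -sj permKV.
by rewrite mnmE -sj; apply: m0.
Qed.

Lemma swapvar_esym i j k : (0 < i < n)%N -> j != i ->
  swapvar i (Defs.esym n j k) = Defs.esym n j k.
Proof.
rewrite /swapvar => /simple_trP [a b ia ib -> _] ji.
apply/mpolyP => m; rewrite mcoeff_sym !esym_coef echar_mperm //.
by apply: tperm_ltn; rewrite ?ia ?ib.
Qed.

Lemma swapvar_hsym i j k : (0 < i < n)%N -> j != i ->
  swapvar i (hsym n j k) = hsym n j k.
Proof.
rewrite /swapvar => /simple_trP [a b ia ib -> _] ji.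
apply/mpolyP => m; rewrite mcoeff_sym !hsym_coef hchar_mperm //.
by apply: tperm_ltn; rewrite ?ia ?ib.
Qed.

Lemma ddiff_esymS i k : (0 < i < n)%N ->
  ddiff i (Defs.esym n i k.+1) = Defs.esym n i.-1 k.
Proof.
move=> lt_in; apply: ddiff_unique => //.
have [a b ia ib sab ->] := simple_trP lt_in.
have sym_a k' : msym (tperm a b) (Defs.esym n a k') = Defs.esym n a k'.
  by rewrite -sab -/(swapvar i _) swapvar_esym // -ia; lia.
by rewrite /swapvar sab -ia /= esymS msymD msymM !sym_a msym_tpermX; ring.
Qed.

Lemma ddiff_hsymS i k : (0 < i < n)%N ->
  ddiff i (hsym n i k.+1) = hsym n i.+1 k.
Proof.
move=> lt_in; apply: ddiff_unique => //.
have [a b ia ib sab ->] := simple_trP lt_in.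
have sym_b k' : msym (tperm a b) (hsym n b.+1 k') = hsym n b.+1 k'.
  by rewrite -sab -/(swapvar i _) swapvar_hsym // ib; lia.
have -> : hsym n i k.+1 = hsym n b.+1 k.+1 - 'X_b * hsym n b.+1 k by rewrite hsymS ib addrK.
by rewrite /swapvar sab msymB msymM !sym_b tpermC msym_tpermX ib; ring.
Qed.

End DividedDifferenceSymmetricFunctions.

Section Permutations.
Variable n : nat.

Lemma tperm_val (a b p : 'I_n) : (tperm a b p : nat) =
  if (p : nat) == a then (b : nat) else if (p : nat) == b then (a : nat) else p.
Proof.
case: (tpermP a b p) => [->|->|pa pb]; first by rewrite eqxx.
  by case: eqP => [/val_inj ->|_]; rewrite ?eqxx.
case: eqP => [/val_inj ?|_]; first by case: pa.
by case: eqP => [/val_inj ?|_] //; case: pb.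
Qed.

Lemma perm_len_tpermM (w : 'S_n) (a b : 'I_n) : (a : nat).+1 = b ->
  (perm_len (tperm a b * w)%g + (w b < w a))%N = (perm_len w + (w a < w b))%N.
Proof.
move=> ab; set s := tperm a b.
pose inv (u : 'S_n) := [set pq : 'I_n * 'I_n | (pq.1 < pq.2)%N && (u pq.2 < u pq.1)%N].
pose phi (pq : 'I_n * 'I_n) := (s pq.1, s pq.2).
have phiK : involutive phi by move=> [p q]; rewrite /phi /= !tpermK.
(* away from the pair (a, b), the adjacent transposition s preserves the order of positions *)
have inv_sw : inv (s * w)%g :\ (a, b) = phi @^-1: (inv w :\ (a, b)).
  apply/setP => -[p q]; rewrite !inE /= !permM /phi /=.
  case: (w (s q) < w (s p))%N; rewrite ?andbF ?andbT //.
  rewrite !xpair_eqE -!(inj_eq val_inj) /= !tperm_val -ab.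
  by do ! case: eqP; move=> *; apply/idP/idP; lia.
have card_sw : #|inv (s * w)%g :\ (a, b)| = #|inv w :\ (a, b)|.
  by rewrite inv_sw card_preimset //; apply: inv_inj.
rewrite /perm_len -/(inv _) -/(inv w) (cardsD1 (a, b) (inv w)) (cardsD1 (a, b) (inv _)).
by rewrite card_sw !inE /= !permM /s tpermL tpermR -ab ltnSn /=; lia.
Qed.

Lemma pvalS (w : 'S_n) (p : 'I_n) : Defs.pval w (p : nat).+1 = (w p : nat).+1.
Proof.
rewrite /Defs.pval /=; case: insubP => [q _ eq|]; last by rewrite ltn_ord.
by congr S; congr (nat_of_ord (w _)); apply: val_inj.
Qed.

Lemma descentE (w : 'S_n) i (a b : 'I_n) : (a : nat).+1 = i -> (b : nat) = i ->
  is_descent w i = (w b < w a)%N.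
Proof. by move=> ia ib; rewrite /is_descent -{1}ib -ia !pvalS. Qed.

Lemma ascentE (w : 'S_n) i (a b : 'I_n) : (a : nat).+1 = i -> (b : nat) = i ->
  is_ascent w i = (w a < w b)%N.
Proof. by move=> ia ib; rewrite /is_ascent -{2}ib -ia !pvalS. Qed.

Lemma ascent_descentN (w : 'S_n) i : (0 < i < n)%N -> is_ascent w i = ~~ is_descent w i.
Proof.
move=> /simple_trP [a b ia ib _ _]; rewrite (ascentE _ ia ib) (descentE _ ia ib).
have wab : w a != w b by rewrite (inj_eq perm_inj) ord_succ_neq // ia ib.
by rewrite -leqNgt ltn_neqAle wab.
Qed.

Lemma perm_len_mul_si (w : 'S_n) i : (0 < i < n)%N ->
  (perm_len (mul_si w i) + is_descent w i = perm_len w + is_ascent w i)%N.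
Proof.
move=> /simple_trP [a b ia ib sab _].
by rewrite /mul_si sab (descentE _ ia ib) (ascentE _ ia ib) perm_len_tpermM // ia ib.
Qed.

Lemma increasing_perm (v : 'S_n) :
  (forall p q : 'I_n, (q : nat) = p.+1 -> (v p < v q)%N) -> v = 1%g.
Proof.
move=> incr.
have ge m (p : 'I_n) : (p : nat) = m -> (m <= v p)%N.
  elim: m p => [//|m IH] p pm; have lt_mn : (m < n)%N by have := ltn_ord p; lia.
  by have := incr (Ordinal lt_mn) p pm; have := IH (Ordinal lt_mn) erefl; lia.
have le d (p : 'I_n) : (p + d = n.-1)%N -> (v p <= p)%N.
  elim: d p => [|d IH] p pd; first by have := ltn_ord (v p); lia.
  have lt_pn : (p.+1 < n)%N by have := ltn_ord p; lia.
  have vp1 : (v (Ordinal lt_pn) <= p.+1)%N by apply: IH => /=; lia.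
  by have := incr p (Ordinal lt_pn) erefl; lia.
apply/permP => p; apply/val_inj; rewrite perm1 /=.
have vp : (v p <= p)%N by apply: (le (n.-1 - p)%N); have := ltn_ord p; lia.
by have := ge p p erefl; lia.
Qed.

Lemma perm1_or_descent (v : 'S_n) :
  v = 1%g \/ exists2 i, (0 < i < n)%N & is_descent v i.
Proof.
have [/existsP [i /andP [i_gt0 desc]]|nodesc] :=
  boolP [exists i : 'I_n, (0 < i)%N && is_descent v i].
  by right; exists i; rewrite ?i_gt0 ?ltn_ord.
left; apply: increasing_perm => p q qp; have lt_qn : (0 < q < n)%N by rewrite ltn_ord qp.
have : ~~ is_descent v q.
  by apply: contra nodesc => desc; apply/existsP; exists q; rewrite desc qp.
by rewrite -ascent_descentN // (@ascentE _ q p q (esym qp) erefl).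
Qed.

Lemma perm_len_mul_si_lt (v : 'S_n) i : (0 < i < n)%N -> is_descent v i ->
  (perm_len (mul_si v i) < perm_len v)%N.
Proof.
by move=> lt_in desc; have := perm_len_mul_si v lt_in; rewrite ascent_descentN // desc; lia.
Qed.

End Permutations.

Ltac lia_ifs := repeat (match goal with |- context [if ?b then _ else _] =>
  lazymatch b with context [if _ then _ else _] => fail | _ =>
  case: (boolP b) => ? end end); try lia.

Section LongestElementChain.
Variable n : nat.
Local Notation P := {mpoly int[n]}.

(* Multiplying [w0] on the right by s_1, ..., s_(n-1), then s_1, ..., s_(n-2), ...,
   and finally s_1 reaches [1] through descents only.  [chain_perm k j] is the
   permutation reached after s_1, ..., s_j in the block ending with s_k, and its
   Schubert polynomial is the monomial ['X_[chain_exp k j]] (0-based positions). *)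
Definition chain_val (k j p : nat) : nat :=
  (if p < j then k.-1 - p else if p == j then k else if p <= k then k - p else p)%N.

Definition chain_exp (k j : nat) : 'X_{1..n} :=
  [multinom (if p < j then k.-1 - p else if p <= k then k - p else 0)%N | p < n].

Definition chain_fun (k j : nat) (p : 'I_n) : nat :=
  if (j <= k < n)%N then chain_val k j p else p.

Lemma chain_fun_lt k j (p : 'I_n) : (chain_fun k j p < n)%N.
Proof.
rewrite /chain_fun; case: ifP => [/andP [le_jk lt_kn]|_]; last exact: ltn_ord.
by have := ltn_ord p; rewrite /chain_val; lia_ifs.
Qed.

Lemma chain_fun_inj k j : injective (fun p => Ordinal (chain_fun_lt k j p)).
Proof.
move=> p q /(congr1 val) /=; rewrite /chain_fun.
case: ifP => [/andP [le_jk lt_kn]|_]; last exact: val_inj.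
by move=> e; apply: val_inj => /=; move: e; rewrite /chain_val; lia_ifs.
Qed.

Definition chain_perm k j : 'S_n := perm (@chain_fun_inj k j).

Lemma chain_permE k j (p : 'I_n) : (j <= k < n)%N ->
  (chain_perm k j p : nat) = chain_val k j p.
Proof. by move=> le_jk_n; rewrite permE /= /chain_fun le_jk_n. Qed.

Lemma chain_perm_mul_si k j : (j < k < n)%N ->
  mul_si (chain_perm k j) j.+1 = chain_perm k j.+1.
Proof.
move=> /andP [lt_jk lt_kn]; have lt_jn : (0 < j.+1 < n)%N by lia.
have [a b ia ib sab _] := simple_trP lt_jn.
rewrite /mul_si sab; apply/permP => p; apply/val_inj.
rewrite permM /= !chain_permE ?tperm_val ?ib /=; try lia.
by move: ia => [->]; rewrite /chain_val; lia_ifs.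
Qed.

Lemma chain_perm_descent k j : (j < k < n)%N -> is_descent (chain_perm k j) j.+1.
Proof.
move=> /andP [lt_jk lt_kn]; have lt_jn : (0 < j.+1 < n)%N by lia.
have [a b ia ib _ _] := simple_trP lt_jn.
rewrite (descentE _ ia ib) !chain_permE; try lia.
by move: ia => [->]; rewrite ib /chain_val; lia_ifs.
Qed.

Lemma chain_perm_w0 : (0 < n)%N -> chain_perm n.-1 0 = w0 n.
Proof.
move=> n_gt0; apply/permP => p; apply/val_inj => /=; rewrite chain_permE; last by lia.
by rewrite /w0 permE /= /chain_val; have := ltn_ord p; lia_ifs.
Qed.

Lemma chain_perm_diag k : (0 < k < n)%N -> chain_perm k k = chain_perm k.-1 0.
Proof.
move=> /andP [k_gt0 lt_kn]; apply/permP => p; apply/val_inj => /=.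
by rewrite !chain_permE /chain_val; lia_ifs.
Qed.

Lemma chain_perm00 : (0 < n)%N -> chain_perm 0 0 = 1%g.
Proof.
move=> n_gt0; apply/permP => p; apply/val_inj => /=.
by rewrite perm1 chain_permE // /chain_val; lia_ifs.
Qed.

Lemma ddiff_chain_exp k j : (j < k < n)%N ->
  ddiff j.+1 ('X_[chain_exp k j] : P) = 'X_[chain_exp k j.+1].
Proof.
move=> /andP [lt_jk lt_kn]; have lt_jn : (0 < j.+1 < n)%N by lia.
apply: ddiff_unique => //; have [a b ia ib sab ->] := simple_trP lt_jn.
move: ia => [ia].
rewrite /swapvar sab msymX tpermV.
have -> : chain_exp k j = (U_(a) + chain_exp k j.+1)%MM.
  by apply/mnmP => p; rewrite mnmDE mnm1E !mnmE -(inj_eq val_inj) /= ia; lia_ifs.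
have -> : [multinom (U_(a) + chain_exp k j.+1)%MM (tperm a b p) | p < n]
        = (U_(b) + chain_exp k j.+1)%MM.
  apply/mnmP => p; rewrite mnmE !mnmDE !mnm1E !mnmE.
  by rewrite -!(inj_eq val_inj) /= !tperm_val ia ib; lia_ifs.
by rewrite !mpolyXD mulrBl.
Qed.

Lemma xdelta_chain_exp : (0 < n)%N -> xdelta n = 'X_[chain_exp n.-1 0].
Proof.
move=> n_gt0; rewrite /xdelta (mpolyXE_id int); apply: eq_bigr => p _.
by rewrite mnmE; congr (_ ^+ _); have := ltn_ord p; lia_ifs.
Qed.

Lemma chain_exp_diag k : (0 < k)%N -> chain_exp k k = chain_exp k.-1 0.
Proof. by move=> k_gt0; apply/mnmP => p; rewrite !mnmE; lia_ifs. Qed.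

Lemma chain_exp00 : chain_exp 0 0 = 0%MM.
Proof. by apply/mnmP => p; rewrite !mnmE; lia_ifs. Qed.

End LongestElementChain.

Section Schubert.
Variables (n : nat) (S : 'S_n -> {mpoly int[n]}).
Hypothesis HS : is_schubert S.
Local Notation P := {mpoly int[n]}.

Lemma schubert_ddiff w i : (0 < i < n)%N ->
  ddiff i (S w) = if is_descent w i then S (mul_si w i) else 0.
Proof.
move=> lt_in; rewrite HS.2; last by lia.
have := perm_len_mul_si w lt_in; rewrite ascent_descentN //.
by case: is_descent => /= len_w; case: eqP => //; lia.
Qed.

Lemma schubert_chain_row k : (k < n)%N ->
  S (chain_perm n k 0) = 'X_[chain_exp n k 0] ->
  forall j, (j <= k)%N -> S (chain_perm n k j) = 'X_[chain_exp n k j].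
Proof.
move=> lt_kn S_k0; elim=> [//|j IH] lt_jk.
have lt_jkn : (j < k < n)%N by rewrite lt_jk.
rewrite -chain_perm_mul_si // -ddiff_chain_exp // -IH 1?ltnW //.
by rewrite schubert_ddiff ?chain_perm_descent //; lia.
Qed.

Lemma schubert_chain_start k : (k < n)%N ->
  S (chain_perm n k 0) = 'X_[chain_exp n k 0].
Proof.
move=> lt_kn; have n_gt0 : (0 < n)%N by lia.
move: {2}(n.-1 - k)%N (erefl (n.-1 - k)%N) => d; elim: d k lt_kn => [|d IH] k lt_kn kd.
  have -> : k = n.-1 by lia.
  by rewrite chain_perm_w0 // HS.1 xdelta_chain_exp.
have lt_k1n : (k.+1 < n)%N by lia.
rewrite -[k]/(k.+1.-1) -chain_perm_diag -?chain_exp_diag //.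
by apply: schubert_chain_row => //; apply: IH => //; lia.
Qed.

Lemma schubert1 : S 1%g = 1.
Proof.
have [n0|n_gt0] := posnP n.
  have -> : 1%g = w0 n by apply/permP => p; have := ltn_ord p; rewrite {2}n0.
  by rewrite HS.1 /xdelta; move: (xdelta n); rewrite n0 big_ord0.
by rewrite -chain_perm00 // schubert_chain_start // chain_exp00 mpolyX0.
Qed.

Lemma schubert_symmetric_factor_unit (p q : P) v :
  (forall i, (0 < i < n)%N -> swapvar i p = p) -> S v = p * q ->
  exists r, p * r = 1.
Proof.
move=> p_sym; move: {2}(perm_len v) (leqnn (perm_len v)) => d.
elim: d v q => [|d IH] v q len_v Sv; have [v1|[i lt_in desc]] := perm1_or_descent v.
- by exists q; rewrite -Sv v1 schubert1.
- by have := perm_len_mul_si_lt lt_in desc; lia.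
- by exists q; rewrite -Sv v1 schubert1.
apply: (IH (mul_si v i) (ddiff i q)).
  by have := perm_len_mul_si_lt lt_in desc; lia.
by have := schubert_ddiff v lt_in; rewrite desc Sv ddiffMl ?p_sym.
Qed.

Lemma schubert_neq0 v : S v != 0.
Proof.
apply/eqP => Sv0; have Sv : S v = 0 * 0 by rewrite Sv0 mulr0.
have [|r] := schubert_symmetric_factor_unit _ Sv.
  by move=> i _; rewrite /swapvar msym0.
by rewrite mul0r => /eqP; rewrite eq_sym oner_eq0.
Qed.

Lemma schubert_ddiff_eq0 w i : (0 < i < n)%N -> (ddiff i (S w) == 0) = is_ascent w i.
Proof.
move=> lt_in; rewrite schubert_ddiff // ascent_descentN //.
by case: is_descent; rewrite ?eqxx // (negbTE (schubert_neq0 _)).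
Qed.

End Schubert.

Section Monomials.
Variables (n : nat) (F : nat -> nat -> {mpoly int[n]}).
Hypothesis F0 : forall j, F j 0 = 1.
Hypothesis F_swapvar : forall i j k, (0 < i < n)%N -> j != i -> swapvar i (F j k) = F j k.

Definition mono (a : nat -> nat) := \prod_(1 <= j < n.+1) F j (a j).

Lemma eq_mono a b : a =1 b -> mono a = mono b.
Proof. by move=> ab; apply: eq_bigr => j _; rewrite ab. Qed.

Lemma mono_split a i : (0 < i <= n)%N -> mono a = F i (a i) * mono [eta a with i |-> 0%N].
Proof.
move=> i_in; rewrite /mono !(bigD1_seq i) ?mem_index_iota ?iota_uniq //= eqxx F0 mul1r.
by congr (_ * _); apply: eq_bigr => j /negbTE ->.
Qed.

Lemma mono_set a i k : (0 < i <= n)%N -> a i = 0%N ->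
  mono [eta a with i |-> k] = F i k * mono a.
Proof.
move=> i_in ai0; rewrite (mono_split _ i_in) /= eqxx [mono a](mono_split _ i_in) ai0 F0 mul1r.
by congr (_ * _); apply: eq_mono => j /=; case: eqP.
Qed.

Lemma ddiff_mono a i : (0 < i < n)%N ->
  ddiff i (mono a) = mono [eta a with i |-> 0%N] * ddiff i (F i (a i)).
Proof.
move=> lt_in; rewrite (@mono_split _ i) 1?mulrC ?ddiffMl //; last by lia.
rewrite /swapvar rmorph_prod; apply: eq_bigr => j _ /=.
by case: eqP => [_|/eqP ji]; [rewrite F0 msym1 | exact: F_swapvar].
Qed.

Section SchubertMonomials.
Variable S : 'S_n -> {mpoly int[n]}.
Hypothesis HS : is_schubert S.

Lemma schubert_mono_ascent a w i : (0 < i < n)%N -> S w = mono a ->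
  ((0 < a i)%N -> ddiff i (F i (a i)) != 0) -> (a i = 0%N <-> is_ascent w i).
Proof.
move=> lt_in Sw ddiff_neq0; rewrite -(schubert_ddiff_eq0 HS) // Sw ddiff_mono //.
have : mono [eta a with i |-> 0%N] != 0.
  apply: contra (schubert_neq0 HS w) => /eqP mono0.
  by rewrite Sw (@mono_split _ i) ?mono0 ?mulr0 //; lia.
rewrite mulf_eq0 => /negbTE ->; have [ai0|ai_gt0] := posnP (a i).
  by rewrite ai0 F0 ddiff_sym ?eqxx // /swapvar msym1.
by rewrite (negbTE (ddiff_neq0 ai_gt0)); split=> // ai0; rewrite ai0 in ai_gt0.
Qed.

Lemma schubert_mono_descent a w i : (0 < i < n)%N -> S w = mono a -> is_descent w i ->
  S (mul_si w i) = mono [eta a with i |-> 0%N] * ddiff i (F i (a i)).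
Proof. by move=> lt_in Sw desc; rewrite -ddiff_mono // -Sw (schubert_ddiff HS) // desc. Qed.

End SchubertMonomials.
End Monomials.

Section ElementaryHomogeneous.
Variables (n : nat) (S : 'S_n -> {mpoly int[n]}).
Hypothesis HS : is_schubert S.

Lemma emono_ascent a w i : std_e n a -> S w = emono n a -> (0 < i < n)%N ->
  a i = 0%N <-> is_ascent w i.
Proof.
move=> std_a Sw lt_in.
apply: (schubert_mono_ascent (esym0 n) (@swapvar_esym n) HS lt_in Sw) => ai_gt0.
rewrite -(prednK ai_gt0) ddiff_esymS // esym_neq0 //; have := std_a i; lia.
Qed.

Lemma emono_descent a w i : std_e n a -> S w = emono n a -> (0 < i < n)%N ->
  is_descent w i -> is_ascent w i.-1 ->
  exists b, std_e n b /\ S (mul_si w i) = emono n b.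
Proof.
move=> std_a Sw lt_in desc asc.
case aik: (a i) => [|k].
  by have := (emono_ascent std_a Sw lt_in).1 aik; rewrite ascent_descentN // desc.
have le_ki : (k < i)%N by rewrite -aik std_a //; lia.
have := schubert_mono_descent (esym0 n) (@swapvar_esym n) HS lt_in Sw desc.
rewrite aik ddiff_esymS // => ->.
have [i1|i_gt1] := eqVneq i 1%N.
  have k0 : k = 0%N by move: le_ki; rewrite i1; lia.
  exists [eta a with i |-> 0%N]; rewrite i1 k0 esym0 mulr1; split=> // j j_in /=.
  by case: eqP => // _; apply: std_a.
have ai1 : a i.-1 = 0%N by apply/(emono_ascent std_a Sw); lia.
exists [eta [eta a with i |-> 0%N] with i.-1 |-> k]; split.
  by move=> j j_in /=; case: eqP => [->|_]; [lia | case: eqP => // _; apply: std_a].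
rewrite mulrC -(mono_set (esym0 n)) //=; first by lia.
by case: eqP.
Qed.

Lemma hmono_last a w : (0 < n)%N -> S w = hmono n a -> a n = 0%N.
Proof.
move=> n_gt0 Sw; apply/eqP/negPn/negP => an_neq0.
have Sw' : S w = hsym n n (a n) * mono (hsym n) [eta a with n |-> 0%N].
  rewrite Sw -[hmono n a]/(mono (hsym n) a).
  by rewrite (mono_split (hsym0 n) a (i := n)) ?n_gt0 /= ?leqnn.
have [|r /(congr1 (mcoeff 0%MM))] := schubert_symmetric_factor_unit HS _ Sw'.
  by move=> i lt_in; apply: swapvar_hsym => //; move: lt_in; lia.
rewrite rmorphM rmorph1 /= hsym_coef /hchar mdeg0 eq_sym (negbTE an_neq0) andbF.
by move/eqP; rewrite mul0r eq_sym oner_eq0.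
Qed.

Lemma hmono_ascent a w i : S w = hmono n a -> (0 < i < n)%N ->
  a i = 0%N <-> is_ascent w i.
Proof.
move=> Sw lt_in.
apply: (schubert_mono_ascent (hsym0 n) (@swapvar_hsym n) HS lt_in Sw) => ai_gt0.
by rewrite -(prednK ai_gt0) ddiff_hsymS // hsym_neq0 //; lia.
Qed.

Lemma hmono_descent a w i : S w = hmono n a -> (0 < i < n)%N ->
  is_descent w i -> is_ascent w i.+1 -> exists b, S (mul_si w i) = hmono n b.
Proof.
move=> Sw lt_in desc asc.
case aik: (a i) => [|k].
  by have := (hmono_ascent Sw lt_in).1 aik; rewrite ascent_descentN // desc.
have ai1 : a i.+1 = 0%N.
  have [lt_i1n|le_ni1] := ltnP i.+1 n; first by apply/(hmono_ascent Sw); lia.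
  have -> : i.+1 = n by lia.
  by apply: hmono_last Sw; lia.
have := schubert_mono_descent (hsym0 n) (@swapvar_hsym n) HS lt_in Sw desc.
rewrite aik ddiff_hsymS // => ->; exists [eta [eta a with i |-> 0%N] with i.+1 |-> k].
rewrite mulrC -(mono_set (hsym0 n)) //=; first by lia.
by case: eqP.
Qed.

End ElementaryHomogeneous.

Local Close Scope ring_scope.

Theorem lemma6 (n : nat) (S : 'S_n -> {mpoly int[n]}) (HS : is_schubert S)
    (w : 'S_n) :
  (forall a : nat -> nat, std_e n a -> S w = emono n a ->
     (forall i : nat, 1 <= i <= n.-1 -> (a i = 0 <-> is_ascent w i)) /\
     (forall i : nat, 1 <= i <= n.-1 -> is_descent w i -> is_ascent w i.-1 ->
        ddiff i (S w) = S (mul_si w i) /\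
        exists b : nat -> nat, std_e n b /\ S (mul_si w i) = emono n b)) /\
  (forall a : nat -> nat, S w = hmono n a ->
     (forall i : nat, 1 <= i <= n.-1 -> (a i = 0 <-> is_ascent w i)) /\
     (forall i : nat, 1 <= i <= n.-1 -> is_descent w i -> is_ascent w i.+1 ->
        ddiff i (S w) = S (mul_si w i) /\
        exists b : nat -> nat, S (mul_si w i) = hmono n b)).
Proof.
have range_lt i : 1 <= i <= n.-1 -> 0 < i < n by lia.
have ddiff_desc i : 0 < i < n -> is_descent w i -> ddiff i (S w) = S (mul_si w i).
  by move=> lt_in desc; rewrite (schubert_ddiff HS) // desc.
split=> [a std_a Sw | a Sw]; split=> i /range_lt lt_in.
- exact (emono_ascent HS std_a Sw lt_in).
- move=> desc asc; split; first exact: ddiff_desc.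
  exact: (emono_descent HS std_a Sw lt_in desc asc).
- exact (hmono_ascent HS Sw lt_in).
- move=> desc asc; split; first exact: ddiff_desc.
  exact: (hmono_descent HS Sw lt_in desc asc).
Qed.
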